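(* Let $n\ge 2$, $p\in(0,1)$, and let $Y,\mu,\sigma^2,\gamma_s$ be as follows: $Y$ is the number of isolated vertices of the Erdős–Rényi random graph on $n$ vertices with edge probability $p$, $\mu=E Y$, $\sigma^2=\mathrm{Var}(Y)$, and $\gamma_s=e^s(pe^s+1-p)^{n-2}(npe^s+1-p)+(n-1)p+1$. Then for every $\theta_0\ge 0$, $$P\Big(\frac{Y-\mu}{\sigma}\ge t\Big)\le\begin{cases}\exp\Big(-\dfrac{t^2\sigma^2}{\mu\,\gamma_{\theta_0/\sigma}}\Big), & t\in\big[0,\ \theta_0\mu\gamma_{\theta_0/\sigma}/(2\sigma^2)\big],\\[2mm] \exp\Big(-\theta_0t+\dfrac{\mu\gamma_{\theta_0/\sigma}\theta_0^2}{4\sigma^2}\Big), & t>\theta_0\mu\gamma_{\theta_0/\sigma}/(2\sigma^2).\end{cases}$$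
   Context: The Erdős–Rényi random graph on $\{1,\ldots,n\}$ with edge probability $p$ has independent Bernoulli($p$) edge indicators for all unordered pairs of distinct vertices. An isolated vertex is a vertex of degree $0$. Here $\mu=n(1-p)^{n-1}$ and $\sigma^2=n(1-p)^{n-1}(1+np(1-p)^{n-2}-(1-p)^{n-2})$. *)

From mathcomp Require Import all_boot.
From Stdlib Require Import Reals.



Unset Printing Implicit Defensive.

(* Possible edges of the complete graph on vertex set 'I_n: 2-element sets. *)
Definition pairs (n : nat) : {set {set 'I_n}} := [set e : {set 'I_n} | #|e| == 2].

Definition prob (n : nat) (p : R) (E : {set {set 'I_n}}) : R :=
  Rmult (pow p #|E|) (pow (Rminus 1 p) (#|pairs n| - #|E|)%N).

Definition Expect (n : nat) (p : R) (f : {set {set 'I_n}} -> R) : R :=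
  \big[Rplus/0%R]_(E in powerset (pairs n)) Rmult (prob n p E) (f E).

Definition Yiso (n : nat) (E : {set {set 'I_n}}) : nat :=
  #|[set v : 'I_n | [forall e in E, v \notin e]]|.

Definition Y (n : nat) (E : {set {set 'I_n}}) : R := INR (Yiso n E).

Open Scope R_scope.

Definition muY (n : nat) (p : R) : R := Expect n p (fun E => Y n E).
Definition var (n : nat) (p : R) : R := Expect n p (fun E => (Y n E - muY n p) ^ 2).
Definition sdY (n : nat) (p : R) : R := sqrt (var n p).

Definition tailP (n : nat) (p t : R) : R :=
  Expect n p (fun E => if Rle_dec t ((Y n E - muY n p) / sdY n p) then 1 else 0).

Definition gammaER (n : nat) (p s : R) : R :=
  exp s * (p * exp s + 1 - p) ^ (n - 2)%nat * (INR n * p * exp s + 1 - p)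
  + INR (n - 1)%nat * p + 1.

Close Scope R_scope.

From mathcomp Require Import all_boot.
From Stdlib Require Import Reals.
From Stdlib Require Import Lra.
From mathcomp Require Import Rstruct.

(* Sub-Gaussian upper tail for the number Y of isolated vertices of G(n,p),
   by the Herbst argument driven by a size-bias inequality.

   Write f(a) = E[exp(aY)].  The heart of the proof is the differential
   inequality  f'(a) = E[Y e^{aY}] <= mu (1 + a/2 gamma_a) f(a)  for a >= 0.
   Since Y = sum_v 1[v isolated], it suffices to bound each E[1[v iso] e^{aY}].
   Splitting the edges into the star S_v at v and the rest T_v, the event
   "v isolated" means "no edge of S_v", so that term factors as
   (1-p)^{n-1} E_T[e^{aY}].  Putting the star back changes Y by at most
   1 + |E cap S_v|, and explicit binomial sums over S_v bound the price of
   this comparison by 1 + a/2 gamma_a.  Herbst's integration of the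
   differential inequality gives f(a) <= exp(mu a + mu gamma_b a^2/4) for
   0 <= a <= b, Markov's inequality applied to exp(theta (Y-mu)/sigma) gives
   a Chernoff bound for every theta in [0, theta0], and optimizing theta
   gives the two regimes of the theorem. *)

Open Scope R_scope.

Lemma nonincreasing_deriv (g g' : R -> R) (a b : R) : a <= b ->
  (forall x, a <= x <= b -> derivable_pt_lim g x (g' x)) ->
  (forall x, a <= x <= b -> g' x <= 0) -> g b <= g a.
Proof.
move=> ab D N; case: (Rle_lt_or_eq_dec a b ab) => [lt|->]; last lra.
have [c [mvt hc]] := MVT_cor2 g g' a b lt D.
have := N c ltac:(lra); have : 0 < b - a by lra.
move=> h1 h2; have : g' c * (b - a) <= 0 by nra.
lra.
Qed.

Lemma exp_le (x y : R) : x <= y -> exp x <= exp y.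
Proof.
move=> h; case: (Rle_lt_or_eq_dec x y h) => [lt|->]; last lra.
exact/Rlt_le/exp_increasing.
Qed.

Lemma exp_INR (c : R) (k : nat) : exp (c * INR k) = exp c ^ k.
Proof.
elim: k => [|k IH]; first by rewrite /= Rmult_0_r exp_0.
by rewrite S_INR Rmult_plus_distr_l exp_plus IH Rmult_1_r /= Rmult_comm.
Qed.

(* Trapezoid bound for the exponential: e^x - 1 <= x (e^x + 1)/2 for x >= 0;
   it converts the star mgf into the expression gamma. *)
Lemma exp_trapezoid (x : R) : 0 <= x -> exp x - 1 <= x / 2 * (exp x + 1).
Proof.
move=> hx.
pose g y := exp y - 1 - y / 2 * (exp y + 1).
pose g' y := (exp y - 0) - (/ 2 * (exp y + 1) + y / 2 * (exp y + 0)).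
suff : g x <= g 0 by rewrite /g exp_0; lra.
apply: (nonincreasing_deriv g g') => // y hy.
  apply: derivable_pt_lim_minus.
    apply: derivable_pt_lim_minus;
      [exact: derivable_pt_lim_exp | exact: derivable_pt_lim_const].
  apply: derivable_pt_lim_mult.
    apply: (derivable_pt_lim_ext (fun y => / 2 * y)) => [z|].
      by rewrite /Rdiv Rmult_comm.
    have := derivable_pt_lim_scal id (/ 2) y 1 (derivable_pt_lim_id y).
    by rewrite Rmult_1_r.
  apply: derivable_pt_lim_plus;
    [exact: derivable_pt_lim_exp | exact: derivable_pt_lim_const].
have e1 := exp_ineq1_le (- y).
have e2 : exp y * exp (- y) = 1 by rewrite -exp_plus Rplus_opp_r exp_0.
have e3 := exp_pos y.
have : exp y * (1 - y) <= 1 by rewrite -e2; apply: Rmult_le_compat_l; lra.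
rewrite /g'; lra.
Qed.

(* Herbst's argument: the differential inequality f' <= (alpha + beta x) f
   with f(0) = 1 integrates to f(a) <= exp(alpha a + beta a^2 / 2), because
   f(x) exp(- alpha x - beta x^2 / 2) has nonpositive derivative. *)
Lemma herbst (f f' : R -> R) (alpha beta a : R) : 0 <= a -> f 0 = 1 ->
  (forall x, 0 <= x <= a -> derivable_pt_lim f x (f' x)) ->
  (forall x, 0 <= x <= a -> f' x <= (alpha + beta * x) * f x) ->
  f a <= exp (alpha * a + beta * a ^ 2 / 2).
Proof.
move=> ha f0 Df Hf.
pose h x := - alpha * x + (- (beta / 2)) * (x * x).
pose h' x := - alpha * 1 + (- (beta / 2)) * (1 * x + x * 1).
have Dh x : derivable_pt_lim h x (h' x).
  apply: derivable_pt_lim_plus.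
    exact: (derivable_pt_lim_scal id (- alpha) x 1 (derivable_pt_lim_id x)).
  apply: (derivable_pt_lim_scal (fun x => x * x)).
  exact: (derivable_pt_lim_mult id id x 1 1
            (derivable_pt_lim_id x) (derivable_pt_lim_id x)).
pose g x := f x * exp (h x).
have g_decr : g a <= g 0.
  apply: (nonincreasing_deriv g
           (fun x => f' x * exp (h x) + f x * (exp (h x) * h' x))) => // x hx.
    apply: derivable_pt_lim_mult; first exact: Df.
    exact: (derivable_pt_lim_comp h exp x _ _ (Dh x) (derivable_pt_lim_exp (h x))).
  have := Hf x hx; have := exp_pos (h x); rewrite /h'; nra.
have hexp : exp (h a) * exp (alpha * a + beta * a ^ 2 / 2) = 1.
  by rewrite -exp_plus -[RHS]exp_0; congr exp; rewrite /h /=; field.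
have g0 : g 0 = 1.
  by rewrite /g f0 /h (_ : _ + _ = 0) ?exp_0 ?Rmult_1_l //; ring.
move: g_decr; rewrite g0 /g.
have := exp_pos (alpha * a + beta * a ^ 2 / 2); nra.
Qed.

Lemma derivable_pt_lim_big (I : Type) (r : seq I) (P : pred I)
    (g dg : I -> R -> R) x :
  (forall i, derivable_pt_lim (g i) x (dg i x)) ->
  derivable_pt_lim (fun a => \big[Rplus/0]_(i <- r | P i) g i a) x
                   (\big[Rplus/0]_(i <- r | P i) dg i x).
Proof.
move=> D; elim: r => [|i r IH].
  rewrite big_nil; apply: (derivable_pt_lim_ext (fun _ => 0)) => [y|].
    by rewrite big_nil.
  exact: derivable_pt_lim_const.
rewrite big_cons; case Pi: (P i).
  apply: (derivable_pt_lim_ext (fun a => g i a + \big[Rplus/0]_(j <- r | P j) g j a)).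
    by move=> y; rewrite big_cons Pi.
  exact: derivable_pt_lim_plus.
apply: (derivable_pt_lim_ext (fun a => \big[Rplus/0]_(j <- r | P j) g j a)) => [y|//].
by rewrite big_cons Pi.
Qed.

Lemma Rsum_le (I : finType) (P : pred I) (F G : I -> R) :
  (forall i, P i -> F i <= G i) ->
  \big[Rplus/0]_(i | P i) F i <= \big[Rplus/0]_(i | P i) G i.
Proof.
move=> H; elim/big_rec2: _ => [|i x y Pi Hxy]; first lra.
have := H i Pi; lra.
Qed.

Lemma Rsum_ge0 (I : finType) (P : pred I) (F : I -> R) :
  (forall i, P i -> 0 <= F i) -> 0 <= \big[Rplus/0]_(i | P i) F i.
Proof.
move=> H; elim/big_rec: _ => [|i x Pi Hx]; first lra.
have := H i Pi; lra.
Qed.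

Lemma iter_Rplus (n : nat) (c : R) : iter n (Rplus c) 0 = INR n * c.
Proof. elim: n => [|n IH]; first (simpl; ring). rewrite iterS IH S_INR; ring. Qed.

(* Product Bernoulli(p) measure on the subsets E of a finite set U: each
   element of U is kept independently with probability p.  G(n,p) is the
   case U = pairs n, and the star decomposition needs the other cases. *)
Section Bernoulli.
Variables (T : finType) (p : R).

Definition bweight (U E : {set T}) : R := p ^ #|E| * (1 - p) ^ (#|U| - #|E|).

Definition Ebern (U : {set T}) (F : {set T} -> R) : R :=
  \big[Rplus/0]_(E in powerset U) (bweight U E * F E).

Lemma eq_Ebern (U : {set T}) (F G : {set T} -> R) :
  (forall E : {set T}, E \subset U -> F E = G E) -> Ebern U F = Ebern U G.
Proof.
by move=> H; rewrite /Ebern; apply: eq_bigr => E; rewrite inE => sE; rewrite H.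
Qed.

Lemma EbernZ (U : {set T}) (F : {set T} -> R) (a : R) :
  Ebern U (fun E => a * F E) = a * Ebern U F.
Proof. rewrite /Ebern big_distrr /=; apply: eq_bigr => E _; ring. Qed.

Lemma EbernD (U : {set T}) (F G : {set T} -> R) :
  Ebern U (fun E => F E + G E) = Ebern U F + Ebern U G.
Proof. rewrite /Ebern -big_split /=; apply: eq_bigr => E _; ring. Qed.

Lemma Ebern_sum (I : finType) (P : pred I) (U : {set T}) (f : I -> {set T} -> R) :
  Ebern U (fun E => \big[Rplus/0]_(i | P i) f i E)
  = \big[Rplus/0]_(i | P i) Ebern U (f i).
Proof.
rewrite /Ebern; under eq_bigr => E _ do rewrite big_distrr /=.
by rewrite exchange_big.
Qed.

Lemma bweight_ge0 (U E : {set T}) : 0 <= p <= 1 -> 0 <= bweight U E.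
Proof. by move=> hp; apply: Rmult_le_pos; apply: pow_le; lra. Qed.

Lemma Ebern_le (U : {set T}) (F G : {set T} -> R) : 0 <= p <= 1 ->
  (forall E : {set T}, E \subset U -> F E <= G E) -> Ebern U F <= Ebern U G.
Proof.
move=> hp H; apply: Rsum_le => E; rewrite inE => sE.
by apply: Rmult_le_compat_l; [exact: bweight_ge0 | exact: H].
Qed.

Lemma Ebern_ge0 (U : {set T}) (F : {set T} -> R) : 0 <= p <= 1 ->
  (forall E : {set T}, 0 <= F E) -> 0 <= Ebern U F.
Proof.
move=> hp H; apply: Rsum_ge0 => E _.
by apply: Rmult_le_pos; [exact: bweight_ge0 | exact: H].
Qed.

Lemma bweight_disjointU (A B E1 E2 : {set T}) : A :&: B = set0 ->
  E1 \subset A -> E2 \subset B ->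
  bweight (A :|: B) (E1 :|: E2) = bweight A E1 * bweight B E2.
Proof.
move=> AB sA sB.
have cAB : #|A :|: B| = (#|A| + #|B|)%nat by rewrite cardsU AB cards0 subn0.
have E12 : E1 :&: E2 = set0 by apply/eqP; rewrite -subset0 -AB; exact: setISS.
have cE : #|E1 :|: E2| = (#|E1| + #|E2|)%nat by rewrite cardsU E12 cards0 subn0.
have l1 := subset_leq_card sA; have l2 := subset_leq_card sB.
rewrite /bweight cAB cE pow_add.
have -> : (#|A| + #|B| - (#|E1| + #|E2|) = (#|A| - #|E1|) + (#|B| - #|E2|))%nat.
  by rewrite subnDA addnC -addnBA // addnC -addnBA // addnC.
rewrite pow_add; ring.
Qed.

Lemma setUI_disjoint {A B E1 E2 : {set T}} : A :&: B = set0 ->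
  E1 \subset A -> E2 \subset B -> (E1 :|: E2) :&: A = E1 /\ (E1 :|: E2) :&: B = E2.
Proof.
move=> AB s1 s2; split.
  rewrite setIUl (setIidPl s1).
  have -> : E2 :&: A = set0 by apply/eqP; rewrite -subset0 -AB setIC; exact: setIS.
  by rewrite setU0.
rewrite setIUl (setIidPl s2).
have -> : E1 :&: B = set0 by apply/eqP; rewrite -subset0 -AB; exact: setSI.
by rewrite set0U.
Qed.

Lemma Ebern_disjointU (A B : {set T}) (F : {set T} -> R) : A :&: B = set0 ->
  Ebern (A :|: B) F =
  \big[Rplus/0]_(E1 in powerset A) \big[Rplus/0]_(E2 in powerset B)
     (bweight A E1 * bweight B E2 * F (E1 :|: E2)).
Proof.
move=> AB.
pose h (x : {set T} * {set T}) := x.1 :|: x.2.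
pose D := [pred x : {set T} * {set T} | (x.1 \in powerset A) && (x.2 \in powerset B)].
have ePS : powerset (A :|: B) = h @: D.
  apply/setP => E; apply/idP/imsetP.
    rewrite inE => sE; exists (E :&: A, E :&: B); first by rewrite inE /= !inE !subsetIr.
    by rewrite /h /= -setIUr; apply/esym/setIidPl.
  move=> [[E1 E2]]; rewrite inE /= !inE => /andP [s1 s2] ->.
  by rewrite /h /= setUSS.
have inj : {in D &, injective h}.
  move=> [E1 E2] [F1 F2]; rewrite !inE /= => /andP [s1 s2] /andP [t1 t2].
  rewrite /h /= => e.
  have [e1 e2] := setUI_disjoint AB s1 s2.
  have [f1 f2] := setUI_disjoint AB t1 t2.
  by congr pair; [rewrite -e1 -f1 e | rewrite -e2 -f2 e].
rewrite /Ebern ePS big_imset //= pair_big /=.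
apply: eq_big => [[E1 E2]|[E1 E2]] //=.
rewrite inE /= !inE => /andP [s1 s2].
by rewrite /h /= bweight_disjointU.
Qed.

Lemma Ebern_setU1 (e : T) (A : {set T}) (F : {set T} -> R) : e \notin A ->
  Ebern (e |: A) F = (1 - p) * Ebern A F + p * Ebern A (fun E => F (e |: E)).
Proof.
move=> eA.
have d : [set e] :&: A = set0.
  apply/setP => x; rewrite !inE; apply/negbTE; apply/andP => [[/eqP -> ]].
  exact/negP.
rewrite Ebern_disjointU // powerset1 big_setU1 /=; last first.
  by rewrite inE; apply/eqP => h; have := set11 e; rewrite -h inE.
rewrite big_set1 /Ebern !big_distrr /=.
have -> : bweight [set e] set0 = 1 - p by rewrite /bweight cards0 cards1 /=; ring.
have -> : bweight [set e] [set e] = p by rewrite /bweight cards1 subnn /=; ring.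
congr Rplus; apply: eq_bigr => E _; rewrite ?set0U; ring.
Qed.

Lemma notin_subsetD1 {U E : {set T}} {e : T} : E \subset U :\ e -> e \notin E.
Proof. by move=> sE; apply/negP => eE; have := subsetP sE e eE; rewrite setD11. Qed.

Lemma Ebern_pow_card (U : {set T}) (x : R) :
  Ebern U (fun E => x ^ #|E|) = (p * x + 1 - p) ^ #|U|.
Proof.
have [k lek] := ubnP #|U|; elim: k U lek => // k IH U.
have [->|[e eU]] := set_0Vmem U.
  by move=> _; rewrite /Ebern powerset0 big_set1 /bweight !cards0 /=; ring.
rewrite ltnS => lek.
have cU : #|U| = (#|U :\ e|).+1 by rewrite (cardsD1 e U) eU.
rewrite -{1}(setD1K eU) Ebern_setU1 ?setD11 // cU /=.
have -> : Ebern (U :\ e) (fun E => x ^ #|e |: E|) = x * Ebern (U :\ e) (fun E => x ^ #|E|).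
  rewrite -EbernZ; apply: eq_Ebern => E sE.
  by rewrite cardsU1 (notin_subsetD1 sE) add1n.
rewrite IH; last by rewrite -ltnS -cU.
ring.
Qed.

Lemma Ebern1 (U : {set T}) : Ebern U (fun _ => 1) = 1.
Proof.
have e1 : p * 1 + 1 - p = 1 by ring.
have := Ebern_pow_card U 1; rewrite e1 pow1 => H.
by rewrite -[RHS]H; apply: eq_Ebern => E _; rewrite pow1.
Qed.

Lemma Ebern_mem_pow (U : {set T}) (e : T) (x : R) : e \in U ->
  Ebern U (fun E => (if e \in E then 1 else 0) * x ^ #|E|)
  = p * x * (p * x + 1 - p) ^ (#|U| - 1).
Proof.
move=> eU.
have cU : #|U| = (#|U :\ e|).+1 by rewrite (cardsD1 e U) eU.
rewrite -{1}(setD1K eU) Ebern_setU1 ?setD11 // cU subSS subn0 -Ebern_pow_card.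
rewrite (eq_Ebern (U :\ e) (fun E => (if e \in E then 1 else 0) * x ^ #|E|)
                  (fun _ => 0 * 1)); last first.
  by move=> E sE; rewrite (negbTE (notin_subsetD1 sE)); ring.
rewrite (eq_Ebern (U :\ e) (fun E => (if e \in e |: E then 1 else 0) * x ^ #|e |: E|)
                  (fun E => x * x ^ #|E|)); last first.
  by move=> E sE; rewrite setU11 cardsU1 (notin_subsetD1 sE) add1n /=; ring.
rewrite !EbernZ; ring.
Qed.

Lemma card_sumR {U E : {set T}} : E \subset U ->
  INR #|E| = \big[Rplus/0]_(e in U) (if e \in E then 1 else 0).
Proof.
move=> sE.
rewrite -sum1_card (big_morph INR plus_INR (erefl (INR 0))) /=.
rewrite [RHS]big_mkcond /= [LHS]big_mkcond /=.
apply: eq_bigr => e _.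
case eE: (e \in E); case eU: (e \in U) => //=.
by have := subsetP sE e eE; rewrite eU.
Qed.

Lemma Ebern_card_pow (U : {set T}) (x : R) :
  Ebern U (fun E => INR #|E| * x ^ #|E|)
  = INR #|U| * (p * x * (p * x + 1 - p) ^ (#|U| - 1)).
Proof.
rewrite (eq_Ebern U _ (fun E => \big[Rplus/0]_(e in U)
           ((if e \in E then 1 else 0) * x ^ #|E|))); last first.
  by move=> E sE; rewrite (card_sumR sE) big_distrl.
rewrite Ebern_sum (eq_bigr (fun _ => p * x * (p * x + 1 - p) ^ (#|U| - 1))).
  by rewrite big_const iter_Rplus.
by move=> e eU; rewrite Ebern_mem_pow.
Qed.

End Bernoulli.
Arguments Ebern {T} p U F.
Arguments bweight {T} p U E.
Arguments eq_Ebern {T p U} F G.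
Arguments setUI_disjoint {T A B E1 E2}.

Section Graph.
Variable n : nat.
Implicit Types (E : {set {set 'I_n}}) (v u : 'I_n).

Definition star v : {set {set 'I_n}} := [set e in pairs n | v \in e].
Definition rest v : {set {set 'I_n}} := pairs n :\: star v.
Definition isolated v E : bool := [forall e in E, v \notin e].

Lemma pair_inj v : injective (fun u : 'I_n => [set u; v]).
Proof.
move=> u u' /= h.
have hu : u \in [set u'; v] by rewrite -h set21.
have hu' : u' \in [set u; v] by rewrite h set21.
move: hu hu'; rewrite !inE => /orP [/eqP //|/eqP uv] /orP [/eqP //|/eqP u'v].
by rewrite uv u'v.
Qed.

Lemma star_image v : star v = (fun u : 'I_n => [set u; v]) @: [set~ v].
Proof.
apply/setP => e; rewrite !inE; apply/idP/imsetP.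
  move=> /andP [/cards2P [x [y [xy ->]]] ve].
  move: ve; rewrite !inE => /orP [/eqP ->|/eqP ->].
    by exists y; rewrite ?inE 1?eq_sym // setUC.
  by exists x; rewrite ?inE.
move=> [u]; rewrite !inE => uv ->.
by rewrite cards2 uv set22.
Qed.

Lemma card_star v : #|star v| = (n - 1)%nat.
Proof.
by rewrite star_image card_imset ?cardsC1 ?card_ord ?subn1 //; exact: pair_inj.
Qed.

Lemma pairs_star_rest v : pairs n = star v :|: rest v.
Proof.
have sub : star v \subset pairs n by apply/subsetP => e; rewrite inE => /andP [].
by rewrite /rest -{1}(setID (pairs n) (star v)) (setIidPr sub).
Qed.

Lemma star_rest_disjoint v : star v :&: rest v = set0.
Proof.
apply/setP => e; rewrite /rest !inE.
by case: (#|e| == 2%nat); case: (v \in e).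
Qed.

Lemma Y_sum E : Y n E = \big[Rplus/0]_(v : 'I_n) (if isolated v E then 1 else 0).
Proof.
rewrite /Y /Yiso -sum1_card (big_morph INR plus_INR (erefl (INR 0))) /=.
rewrite big_mkcond /=; apply: eq_bigr => v _; rewrite inE /isolated.
by case: [forall e in E, v \notin e].
Qed.

Lemma isolated_star v E : E \subset pairs n ->
  if isolated v E then E :&: star v = set0 /\ E :&: rest v = E
  else (0 < #|E :&: star v|)%nat.
Proof.
move=> sE; case h: (isolated v E).
  have e0 : E :&: star v = set0.
    apply/setP => e; rewrite !inE; apply/negbTE; apply/andP => [[eE /andP [_ ve]]].
    by move/forall_inP: h => /(_ e eE); rewrite ve.
  split => //; apply/setP => e; rewrite /rest !inE.
  case eE: (e \in E) => //=.
  have := subsetP sE e eE; rewrite inE => ->.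
  by move/forall_inP: h => /(_ e eE) /negbTE ->.
move/negbT: h; rewrite /isolated negb_forall_in => /existsP [e /andP [eE]].
rewrite negbK => ve; apply/card_gt0P; exists e; rewrite !inE eE ve andbT /=.
by have := subsetP sE e eE; rewrite inE.
Qed.

(* Removing the star edges of v creates at most 1 + |E cap star v| new
   isolated vertices: v itself and the other endpoints of its edges. *)
Lemma Yiso_rest_le v E : E \subset pairs n ->
  (Yiso n (E :&: rest v) <= Yiso n E + 1 + #|E :&: star v|)%nat.
Proof.
move=> sE.
pose N := [set u | [set u; v] \in E :&: star v].
have cN : (#|N| <= #|E :&: star v|)%nat.
  rewrite -(card_imset N (@pair_inj v)); apply: subset_leq_card.
  by apply/subsetP => e /imsetP [u]; rewrite inE => h ->.
rewrite /Yiso.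
apply: (leq_trans (n := #|[set u | [forall e in E, u \notin e]] :|: [set v] :|: N|)).
  apply: subset_leq_card; apply/subsetP => u; rewrite !inE => /forall_inP hu.
  case iu: [forall e in E, u \notin e] => //=.
  case uv: (u == v) => //=.
  move/negbT: iu; rewrite negb_forall_in => /existsP [e /andP [eE]]; rewrite negbK => ue.
  have eP : e \in pairs n by exact: (subsetP sE).
  have eS : e \in star v.
    case eS: (e \in star v) => //.
    have : e \in E :&: rest v by rewrite in_setI eE /rest in_setD eS eP.
    by move/hu; rewrite ue.
  have ve : v \in e by move: eS; rewrite inE => /andP [].
  move: (eP); rewrite inE => /cards2P [x [y [xy ex]]].
  have -> : [set u; v] = e.
    rewrite ex; move: ue ve; rewrite ex !inE.
    move=> /orP [/eqP eu|/eqP eu] /orP [/eqP vx|/eqP vy].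
    - by move: uv; rewrite eu vx eqxx.
    - by rewrite eu vy.
    - by rewrite eu vx setUC.
    - by move: uv; rewrite eu vy eqxx.
  by rewrite eE /=; move: eP; rewrite inE => ->; rewrite eqxx orbT.
apply: (leq_trans (n := #|[set u | [forall e in E, u \notin e]] :|: [set v]| + #|N|)).
  by rewrite cardsU leq_subr.
apply: leq_add => //.
by rewrite -(cards1 v) cardsU leq_subr.
Qed.

Variable p : R.

Lemma Expect_Ebern (f : {set {set 'I_n}} -> R) : Expect n p f = Ebern p (pairs n) f.
Proof. by []. Qed.

Lemma Expect_star_rest v (G : {set {set 'I_n}} -> R) (H : nat -> R) :
  Expect n p (fun E => G (E :&: rest v) * H #|E :&: star v|)
  = Ebern p (rest v) G * Ebern p (star v) (fun E => H #|E|).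
Proof.
rewrite Expect_Ebern {1}(pairs_star_rest v) Ebern_disjointU ?star_rest_disjoint //.
rewrite Rmult_comm /Ebern big_distrl /=.
apply: eq_bigr => E1; rewrite inE => s1; rewrite big_distrr /=.
apply: eq_bigr => E2; rewrite inE => s2.
have [-> ->] := setUI_disjoint (star_rest_disjoint v) s1 s2; ring.
Qed.

Lemma Expect_isolated_mgf v (a : R) :
  Expect n p (fun E => (if isolated v E then 1 else 0) * exp (a * Y n E))
  = Ebern p (rest v) (fun E => exp (a * Y n E)) * (1 - p) ^ (n - 1).
Proof.
rewrite (Expect_Ebern (fun E => _ * _)).
rewrite (eq_Ebern _ (fun E => exp (a * Y n (E :&: rest v)) * 0 ^ #|E :&: star v|)).
  rewrite -Expect_Ebern (Expect_star_rest v (fun E => exp (a * Y n E)) (fun k => 0 ^ k)) Ebern_pow_card card_star.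
  by congr Rmult; congr pow; ring.
move=> E sE; have := isolated_star v E sE; case: (isolated v E).
  by move=> [-> ->]; rewrite cards0 /=; ring.
by case: #|E :&: star v| => //= k _; ring.
Qed.

Lemma Expect_Y_mgf (a : R) :
  Expect n p (fun E => Y n E * exp (a * Y n E))
  = \big[Rplus/0]_(v : 'I_n)
      Expect n p (fun E => (if isolated v E then 1 else 0) * exp (a * Y n E)).
Proof.
rewrite !Expect_Ebern -Ebern_sum; apply: eq_Ebern => E _.
by rewrite {1}Y_sum big_distrl.
Qed.

Lemma muY_sum : muY n p = \big[Rplus/0]_(v : 'I_n) (1 - p) ^ (n - 1).
Proof.
rewrite /muY (Expect_Ebern (fun E => Y n E)).
rewrite (eq_Ebern _ (fun E => Y n E * exp (0 * Y n E))); last first.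
  by move=> E _; rewrite Rmult_0_l exp_0 Rmult_1_r.
rewrite -Expect_Ebern Expect_Y_mgf; apply: eq_bigr => v _.
rewrite Expect_isolated_mgf (eq_Ebern _ (fun _ => 1)) ?Ebern1 ?Rmult_1_l //.
by move=> E _; rewrite Rmult_0_l exp_0.
Qed.

(* Putting the star back (Yiso_rest_le) compares the rest mgf with the mgf. *)
Lemma mgf_rest_star v (a : R) : 0 <= a -> 0 <= p <= 1 ->
  Ebern p (rest v) (fun E => exp (a * Y n E))
    * Ebern p (star v) (fun E => exp (- a * INR (1 + #|E|)))
  <= Expect n p (fun E => exp (a * Y n E)).
Proof.
move=> ha hp.
rewrite -(Expect_star_rest v (fun E => exp (a * Y n E))
                            (fun k => exp (- a * INR (1 + k)))).
rewrite !Expect_Ebern; apply: Ebern_le => // E sE.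
rewrite -exp_plus; apply: exp_le.
have := le_INR _ _ (leP (Yiso_rest_le v E sE)); rewrite !plus_INR /Y /= => h.
nra.
Qed.

Lemma star_mgf v c : Ebern p (star v) (fun E => exp (c * INR (1 + #|E|)))
  = exp c * (p * exp c + 1 - p) ^ (n - 1).
Proof.
rewrite (eq_Ebern _ (fun E => exp c * exp c ^ #|E|)); last first.
  by move=> E _; rewrite plus_INR Rmult_plus_distr_l exp_plus !exp_INR /=; ring.
by rewrite EbernZ Ebern_pow_card card_star.
Qed.

Lemma star_mean v : Ebern p (star v) (fun E => INR (1 + #|E|)) = 1 + INR (n - 1) * p.
Proof.
rewrite (eq_Ebern _ (fun E => 1 + INR #|E| * 1 ^ #|E|)); last first.
  by move=> E _; rewrite plus_INR pow1 /=; ring.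
rewrite EbernD Ebern1 Ebern_card_pow card_star.
have -> : p * 1 + 1 - p = 1 by ring.
rewrite pow1; ring.
Qed.

Lemma star_size_mgf v a :
  Ebern p (star v) (fun E => INR (1 + #|E|) * exp (a * INR (1 + #|E|)))
  = exp a * ((p * exp a + 1 - p) ^ (n - 1)
             + INR (n - 1) * (p * exp a * (p * exp a + 1 - p) ^ (n - 1 - 1))).
Proof.
rewrite (eq_Ebern _ (fun E => exp a * (exp a ^ #|E|)
                              + exp a * (INR #|E| * exp a ^ #|E|))); last first.
  by move=> E _; rewrite plus_INR Rmult_plus_distr_l exp_plus !exp_INR /=; ring.
by rewrite EbernD !EbernZ Ebern_pow_card Ebern_card_pow card_star; ring.
Qed.

(* The trapezoid bound turns the star mgf into 1 + a/2 gamma_a. *)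
Lemma star_mgf_le_gamma v a : 0 <= a -> 0 <= p <= 1 -> (2 <= n)%nat ->
  Ebern p (star v) (fun E => exp (a * INR (1 + #|E|))) <= 1 + a / 2 * gammaER n p a.
Proof.
move=> ha hp n2.
apply: (Rle_trans _ (Ebern p (star v) (fun E => 1 + a / 2 *
   (INR (1 + #|E|) * exp (a * INR (1 + #|E|)) + INR (1 + #|E|))))).
  apply: Ebern_le => // E _.
  have hW := pos_INR (1 + #|E|).
  have := exp_trapezoid (a * INR (1 + #|E|)) ltac:(nra).
  lra.
rewrite EbernD Ebern1 EbernZ EbernD star_mean star_size_mgf.
apply: Req_le; rewrite /gammaER.
case: n n2 => [|[|m]] // _.
rewrite (_ : (m.+2 - 1 = m.+1)%nat) // (_ : (m.+1 - 1 = m)%nat) ?subn1 //.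
rewrite (_ : (m.+2 - 2 = m)%nat) ?subSS ?subn0 //.
rewrite !S_INR /=; ring.
Qed.

Lemma star_mgf_pair v a : 0 <= p <= 1 ->
  1 <= Ebern p (star v) (fun E => exp (a * INR (1 + #|E|)))
       * Ebern p (star v) (fun E => exp (- a * INR (1 + #|E|))).
Proof.
move=> hp; rewrite !star_mgf.
rewrite (_ : _ * _ = (exp a * exp (- a))
                     * ((p * exp a + 1 - p) * (p * exp (- a) + 1 - p)) ^ (n - 1)).
  rewrite -exp_plus Rplus_opp_r exp_0 Rmult_1_l; apply: pow_R1_Rle.
  have inv : exp a * exp (- a) = 1 by rewrite -exp_plus Rplus_opp_r exp_0.
  have cosh2 : 2 <= exp a + exp (- a).
    have := exp_pos a; have := exp_pos (- a).
    have : 0 <= (exp a - exp (- a)) ^ 2 by apply: pow2_ge_0.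
    nra.
  have : 0 <= p * (1 - p) by nra.
  nra.
by rewrite Rpow_mult_distr; ring.
Qed.

Lemma mgf_ge0 a : 0 <= p <= 1 -> 0 <= Expect n p (fun E => exp (a * Y n E)).
Proof. by move=> hp; apply: Ebern_ge0 => // E; apply/Rlt_le/exp_pos. Qed.

Lemma rest_mgf_le v a : 0 <= a -> 0 <= p <= 1 -> (2 <= n)%nat ->
  Ebern p (rest v) (fun E => exp (a * Y n E))
  <= Expect n p (fun E => exp (a * Y n E)) * (1 + a / 2 * gammaER n p a).
Proof.
move=> ha hp n2.
have hR := mgf_rest_star v a ha hp; have hB := star_mgf_pair v a hp.
have hS := star_mgf_le_gamma v a ha hp n2.
set A := Ebern p (rest v) _ in hR *; set f := Expect n p _ in hR *.
set Bp := Ebern p (star v) (fun E => exp (a * _)) in hB hS.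
set Bm := Ebern p (star v) (fun E => exp (- a * _)) in hR hB.
have A0 : 0 <= A by apply: Ebern_ge0 => // E; apply/Rlt_le/exp_pos.
have Bp0 : 0 <= Bp by apply: Ebern_ge0 => // E; apply/Rlt_le/exp_pos.
have Bm0 : 0 <= Bm by apply: Ebern_ge0 => // E; apply/Rlt_le/exp_pos.
apply: (Rle_trans _ (A * Bm * Bp)); first nra.
apply: (Rle_trans _ (f * Bp)); first exact: Rmult_le_compat_r.
by apply: Rmult_le_compat_l; first exact: mgf_ge0.
Qed.

Lemma size_bias_bound a : 0 <= a -> 0 <= p <= 1 -> (2 <= n)%nat ->
  Expect n p (fun E => Y n E * exp (a * Y n E))
  <= muY n p * (1 + a / 2 * gammaER n p a) * Expect n p (fun E => exp (a * Y n E)).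
Proof.
move=> ha hp n2.
rewrite Expect_Y_mgf muY_sum big_distrl big_distrl /=.
apply: Rsum_le => v _; rewrite Expect_isolated_mgf.
have q0 : 0 <= (1 - p) ^ (n - 1) by apply: pow_le; lra.
have := Rmult_le_compat_r _ _ _ q0 (rest_mgf_le v a ha hp n2).
lra.
Qed.

End Graph.

Lemma mgf_derivative n p x :
  derivable_pt_lim (fun a => Expect n p (fun E => exp (a * Y n E))) x
    (Expect n p (fun E => Y n E * exp (x * Y n E))).
Proof.
have dexp (c y : R) :
    derivable_pt_lim (fun a => c * exp (a * y)) x (c * (y * exp (x * y))).
  have lin : derivable_pt_lim (fun a => a * y) x y.
    apply: (derivable_pt_lim_ext (fun a => y * a)) => [a|]; first exact: Rmult_comm.
    have := derivable_pt_lim_scal id y x 1 (derivable_pt_lim_id x).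
    by rewrite Rmult_1_r.
  have := derivable_pt_lim_scal _ c x _
            (derivable_pt_lim_comp _ exp x _ _ lin (derivable_pt_lim_exp (x * y))).
  by rewrite (Rmult_comm (exp (x * y)) y).
exact (derivable_pt_lim_big _ (index_enum _) (fun E => E \in powerset (pairs n))
          (fun E a => prob n p E * exp (a * Y n E))
          (fun E a => prob n p E * (Y n E * exp (a * Y n E))) x
          (fun E => dexp (prob n p E) (Y n E))).
Qed.

(* gamma_s is nondecreasing in s; Herbst needs gamma_x <= gamma_b on [0, b]. *)
Lemma gamma_mono n p s s' : 0 <= p <= 1 -> s <= s' -> gammaER n p s <= gammaER n p s'.
Proof.
move=> hp ss; rewrite /gammaER.
have e1 := exp_le _ _ ss; have e0 := exp_pos s.
have hn := pos_INR n; have np : 0 <= INR n * p by nra.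
have hX : 0 <= p * exp s + 1 - p by nra.
have hXX : p * exp s + 1 - p <= p * exp s' + 1 - p by nra.
have hZ : 0 <= INR n * p * exp s + 1 - p by nra.
have hZZ : INR n * p * exp s + 1 - p <= INR n * p * exp s' + 1 - p by nra.
have hP := pow_incr _ _ (n - 2) (conj hX hXX).
have hP0 := pow_le _ (n - 2) hX.
apply: Rplus_le_compat_r; apply: Rplus_le_compat_r.
apply: Rmult_le_compat => //; first by apply: Rmult_le_pos => //; lra.
apply: Rmult_le_compat => //; lra.
Qed.

Lemma mgf_le n p a b : 0 <= a <= b -> 0 <= p <= 1 -> (2 <= n)%nat ->
  Expect n p (fun E => exp (a * Y n E))
  <= exp (muY n p * a + muY n p * gammaER n p b * a ^ 2 / 4).
Proof.
move=> hab hp n2.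
set mu := muY n p; set G := gammaER n p b.
have mu0 : 0 <= mu by rewrite /mu muY_sum; apply: Rsum_ge0 => v _; apply: pow_le; lra.
have f0 : Expect n p (fun E => exp (0 * Y n E)) = 1.
  by rewrite Expect_Ebern -[RHS](Ebern1 _ p (pairs n)); apply: eq_Ebern => E _; rewrite Rmult_0_l exp_0.
have := herbst _ _ mu (mu * G / 2) a ltac:(lra) f0 (fun x _ => mgf_derivative n p x).
have -> : mu * a + mu * G / 2 * a ^ 2 / 2 = mu * a + mu * G * a ^ 2 / 4 by field.
apply=> x hx.
have := size_bias_bound n p x ltac:(lra) hp n2; rewrite -/mu.
have hG : gammaER n p x <= G by apply: gamma_mono => //; lra.
have := mgf_ge0 n p x hp; set f := Expect n p _ => f0'.
have : 0 <= mu * (x / 2) * f * (G - gammaER n p x).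
  by repeat apply: Rmult_le_pos => //; lra.
nra.
Qed.

Lemma tail_le_chernoff n p t th th0 : 0 <= th <= th0 -> 0 < sdY n p ->
  0 <= p <= 1 -> (2 <= n)%nat ->
  tailP n p t
  <= exp (- th * t + muY n p * gammaER n p (th0 / sdY n p) * th ^ 2 / (4 * sdY n p ^ 2)).
Proof.
move=> hth hs hp n2.
set s := sdY n p in hs *; set mu := muY n p; set G := gammaER n p (th0 / s).
have is0 : 0 <= / s by exact/Rlt_le/Rinv_0_lt_compat.
have ha : 0 <= th / s <= th0 / s.
  by split; [apply: Rmult_le_pos; lra | apply: Rmult_le_compat_r; lra].
(* Markov: 1[(Y - mu)/s >= t] <= exp(th ((Y - mu)/s - t)). *)
apply: (Rle_trans _ (Expect n p (fun E =>
          exp (- th * t - th * mu / s) * exp (th / s * Y n E)))).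
  rewrite /tailP !Expect_Ebern; apply: Ebern_le => // E _.
  case: Rle_dec; rewrite -/s -/mu => h; last by apply/Rlt_le/Rmult_lt_0_compat; apply: exp_pos.
  rewrite -exp_0 -exp_plus; apply: exp_le.
  have -> : - th * t - th * mu / s + th / s * Y n E = th * ((Y n E - mu) / s - t).
    by field; lra.
  apply: Rmult_le_pos; lra.
rewrite Expect_Ebern EbernZ -Expect_Ebern.
apply: (Rle_trans _ (exp (- th * t - th * mu / s)
                     * exp (mu * (th / s) + mu * G * (th / s) ^ 2 / 4))).
  by apply: Rmult_le_compat_l; [exact/Rlt_le/exp_pos | exact: mgf_le].
rewrite -exp_plus; apply: Req_le; congr exp; field; lra.
Qed.

(* Optimizing the Chernoff exponent  - th t + c th^2  (c = mu G / (4 s^2))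
   over th in [0, th0]: the minimizer t / (2c) is admissible iff t <= 2 c th0;
   otherwise the endpoint th0 is used. *)
Lemma chernoff_optimize (P mu G s th0 t : R) :
  0 < mu -> 0 < G -> 0 < s -> 0 <= th0 -> 0 <= t ->
  (forall th, 0 <= th <= th0 -> P <= exp (- th * t + mu * G * th ^ 2 / (4 * s ^ 2))) ->
  (t <= th0 * mu * G / (2 * s ^ 2) -> P <= exp (- (t ^ 2 * s ^ 2) / (mu * G))) /\
  (th0 * mu * G / (2 * s ^ 2) < t ->
     P <= exp (- th0 * t + mu * G * th0 ^ 2 / (4 * s ^ 2))).
Proof.
move=> mu0 G0 s0 hth0 ht bound.
have s2 : 0 < s ^ 2 by apply: pow_lt.
have muG : 0 < mu * G by apply: Rmult_lt_0_compat.
split => [hle|_]; last by apply: bound; lra.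
have k0 : 0 < 2 * s ^ 2 / (mu * G) by apply: Rmult_lt_0_compat; [lra | exact: Rinv_0_lt_compat].
pose th := t * (2 * s ^ 2 / (mu * G)).
have := bound th; rewrite (_ : - th * t + _ = - (t ^ 2 * s ^ 2) / (mu * G)).
  apply; split; first by apply: Rmult_le_pos; lra.
  have -> : th0 = th0 * mu * G / (2 * s ^ 2) * (2 * s ^ 2 / (mu * G)) by field; lra.
  exact: Rmult_le_compat_r (Rlt_le _ _ k0) hle.
by rewrite /th; field; lra.
Qed.

Lemma mu_pos n p : 0 < p < 1 -> (2 <= n)%nat -> 0 < muY n p.
Proof.
move=> hp n2; rewrite muY_sum big_const iter_Rplus card_ord.
apply: Rmult_lt_0_compat; first by apply/lt_0_INR/ltP; exact: leq_trans n2.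
apply: pow_lt; lra.
Qed.

Lemma gamma_pos n p s : 0 < p < 1 -> 0 < gammaER n p s.
Proof.
move=> hp; rewrite /gammaER.
have e0 := exp_pos s.
have hn := pos_INR n; have hn1 := pos_INR (n - 1); have np : 0 <= INR n * p by nra.
have hX : 0 <= p * exp s + 1 - p by nra.
have hZ : 0 <= INR n * p * exp s + 1 - p by nra.
have hP := pow_le _ (n - 2) hX.
have : 0 <= exp s * (p * exp s + 1 - p) ^ (n - 2) * (INR n * p * exp s + 1 - p).
  by apply: Rmult_le_pos => //; apply: Rmult_le_pos => //; lra.
have : 0 <= INR (n - 1) * p by nra.
lra.
Qed.

Lemma tailP_le1 n p t : 0 <= p <= 1 -> tailP n p t <= 1.
Proof.
move=> hp; rewrite /tailP Expect_Ebern.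
apply: (Rle_trans _ (Ebern p (pairs n) (fun _ => 1))); last by rewrite Ebern1; lra.
by apply: Ebern_le => // E _; case: Rle_dec => /= _; lra.
Qed.

(* With the convention x / 0 = 0, a zero standard deviation makes the
   normalized deviation 0, so positive thresholds have probability 0. *)
Lemma tailP_sd0 n p t : sdY n p = 0 -> 0 < t -> tailP n p t = 0.
Proof.
move=> s0 ht; rewrite /tailP Expect_Ebern (eq_Ebern _ (fun _ => 0 * 1)).
  by rewrite EbernZ Rmult_0_l.
by move=> E _; rewrite s0 /Rdiv Rinv_0 Rmult_0_r; case: Rle_dec => /= h; lra.
Qed.

Theorem mainTheorem2 (n : nat) (p theta0 t : R) :
  (2 <= n)%nat -> 0 < p < 1 -> 0 <= theta0 -> 0 <= t ->
  (t <= theta0 * muY n p * gammaER n p (theta0 / sdY n p) / (2 * sdY n p ^ 2) ->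
     tailP n p t <=
       exp (- (t ^ 2 * sdY n p ^ 2) / (muY n p * gammaER n p (theta0 / sdY n p)))) /\
  (theta0 * muY n p * gammaER n p (theta0 / sdY n p) / (2 * sdY n p ^ 2) < t ->
     tailP n p t <=
       exp (- theta0 * t
            + muY n p * gammaER n p (theta0 / sdY n p) * theta0 ^ 2 / (4 * sdY n p ^ 2))).
Proof.
move=> n2 hp hth ht.
have hp' : 0 <= p <= 1 by lra.
case: (Rle_lt_or_eq_dec 0 (sdY n p) (sqrt_pos _)) => [s_pos|/esym s0].
  apply: chernoff_optimize => //; [exact: mu_pos | exact: gamma_pos |].
  by move=> th hth'; apply: tail_le_chernoff.
have lhs0 : - (t ^ 2 * 0 ^ 2) / (muY n p * gammaER n p (theta0 / 0)) = 0.
  by rewrite /Rdiv; ring.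
have cut0 : theta0 * muY n p * gammaER n p (theta0 / 0) / (2 * 0 ^ 2) = 0.
  by rewrite (_ : 2 * 0 ^ 2 = 0) /Rdiv ?Rinv_0 ?Rmult_0_r //; ring.
rewrite s0 lhs0 cut0 exp_0; split => [_|t_pos]; first exact: tailP_le1.
by rewrite tailP_sd0 //; apply/Rlt_le/exp_pos.
Qed.
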